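(* Let $n\ge 1$ and consider $n$ qubits, labelled $1,\dots,n$. Let $$\mathcal{P}_n=\{I,X,Y,Z\}^{\otimes n}\setminus\{I^{\otimes n}\}$$ be the set of non-identity $n$-qubit Pauli products, where $I$ is the $2\times 2$ identity and $X,Y,Z$ are the Pauli matrices. Let $$\mathcal{O}=\{X,Y\}\otimes\{I,Z\}^{\otimes(n-1)}$$ be the set of operators observable in a single experiment (qubit $1$ is the probe qubit). Let $R_x=e^{-i\pi X/4}$ and $R_y=e^{-i\pi Y/4}$ be the $\pi/2$ rotations about the $x$ and $y$ axes, and for $j\in\{1,\dots,n\}$ let $W_{1j}$ be the SWAP gate exchanging qubits $1$ and $j$ (with $W_{11}=I^{\otimes n}$). Let the set of available readout operations be $$\mathcal{U}=\{\,V W_{1j} : V\in\{I,R_x,R_y\}^{\otimes n},\ j=1,\dots,n\,\}.$$ For $U\in\mathcal{U}$ let $S_U=\{UOU^\dagger : O\in\mathcal{O}\}$, where each $UOU^\dagger$ is an element of $\mathcal{P}_n$ up to a sign, and these elements are identified with elements of $\mathcal{P}_n$ by ignoring the sign. Let $f^*_n$ be the minimum cardinality of a subset $\mathcal{U}'\subseteq\mathcal{U}$ such that $\bigcup_{U\in\mathcal{U}'}S_U=\mathcal{P}_n$. Then $$f^*_n=\frac{3^n+1}{2}.$$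
   Context: This formalizes quantum state tomography via a single probe qubit: each readout operation $U$ corresponds to one experiment, which reveals the expectation values of the Pauli operators in $S_U$. Full tomography requires every element of $\mathcal{P}_n$ to be covered, and $f^*_n$ is the minimum number of experiments needed. *)

From HB Require Import structures.
From mathcomp Require Import all_boot all_order all_algebra.
From mathcomp Require Import algC.
Set Implicit Arguments. Unset Strict Implicit. Unset Printing Implicit Defensive.
Import Order.TTheory GRing.Theory Num.Theory.
Local Open Scope ring_scope.

Inductive pauli := PI | PX | PY | PZ.
Inductive gate := GI | GRx | GRy.

(* Computational basis |0> = false, |1> = true; entry (a, b) = row a, column b. *)
Definition pauli_mx (P : pauli) (a b : bool) : algC :=
  match P with
  | PI => (a == b)%:R
  | PX => (a != b)%:R
  | PY => if a == b then 0 else if b then - 'i else 'i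
  | PZ => if a == b then (if a then -1 else 1) else 0
  end.

(* R_x = exp(-i pi X/4) = (I - i X)/sqrt 2 ;  R_y = exp(-i pi Y/4) = (I - i Y)/sqrt 2 *)
Definition gate_mx (g : gate) (a b : bool) : algC :=
  match g with
  | GI => pauli_mx PI a b
  | GRx => (pauli_mx PI a b - 'i * pauli_mx PX a b) / sqrtC 2
  | GRy => (pauli_mx PI a b - 'i * pauli_mx PY a b) / sqrtC 2
  end.

(* n-qubit computational basis states and operators (2^n x 2^n matrices,
   indexed by basis states). *)
Definition basis n := {ffun 'I_n -> bool}.
Definition op n := {ffun basis n * basis n -> algC}.

Definition mulop n (A B : op n) : op n :=
  [ffun p => \sum_(z : basis n) A (p.1, z) * B (z, p.2)].
Definition adjop n (A : op n) : op n := [ffun p => (A (p.2, p.1))^*].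
Definition oppop n (A : op n) : op n := [ffun p => - A p].

Definition tensop n (F : 'I_n -> bool -> bool -> algC) : op n :=
  [ffun p : basis n * basis n => \prod_(k < n) F k (p.1 k) (p.2 k)].

Definition pauli_op n (s : 'I_n -> pauli) : op n :=
  tensop (fun k => pauli_mx (s k)).

(* SWAP of qubits p0 and j:  W |y> = |y o tau>, tau the transposition (p0 j). *)
Definition swap_idx n (p0 j k : 'I_n) : 'I_n :=
  if k == p0 then j else if k == j then p0 else k.
Definition swap_op n (p0 j : 'I_n) : op n :=
  [ffun p : basis n * basis n =>
     (p.1 == [ffun k => p.2 (swap_idx p0 j k)])%:R].

Definition readout n (p0 : 'I_n) (V : 'I_n -> gate) (j : 'I_n) : op n :=
  mulop (tensop (fun k => gate_mx (V k))) (swap_op p0 j).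

Definition is_readout n (p0 : 'I_n) (U : op n) : Prop :=
  exists (V : 'I_n -> gate) (j : 'I_n), U = readout p0 V j.

Definition observable n (p0 : 'I_n) (o : 'I_n -> pauli) : Prop :=
  (o p0 = PX \/ o p0 = PY) /\ (forall k, k != p0 -> o k = PI \/ o k = PZ).

Definition nonidentity n (s : 'I_n -> pauli) : Prop := exists k, s k <> PI.

Definition in_S n (p0 : 'I_n) (U : op n) (s : 'I_n -> pauli) : Prop :=
  nonidentity s /\
  exists o, observable p0 o /\
    (mulop (mulop U (pauli_op o)) (adjop U) = pauli_op s \/
     mulop (mulop U (pauli_op o)) (adjop U) = oppop (pauli_op s)).

(* A finite subset U' of the readout operations (a duplicate-free list)
   whose S_U cover P_n. *)
Definition is_cover n (p0 : 'I_n) (L : seq (op n)) : Prop :=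
  [/\ uniq L,
      (forall U, U \in L -> is_readout p0 U) &
      (forall s, nonidentity s -> exists2 U, U \in L & in_S p0 U s)].

Definition min_cover_card n (p0 : 'I_n) (N : nat) : Prop :=
  (exists L, is_cover p0 L /\ size L = N) /\
  (forall L, is_cover p0 L -> (N <= size L)%N).

From HB Require Import structures.
From mathcomp Require Import all_boot all_order all_algebra.
From mathcomp Require Import algC ring zify.
Set Implicit Arguments. Unset Strict Implicit. Unset Printing Implicit Defensive.
Import Order.TTheory GRing.Theory Num.Theory.
Local Open Scope ring_scope.

(* Conjugation by U = V W_(1j) moves qubit 1 to qubit j and then maps the
   Pauli letter of each qubit k, up to sign, through the gate V_k, which fixes
   I and permutes X, Y, Z.  Writing z_k for the image of Z under V_k, the set
   S_U is therefore exactly the set of strings s with s_j outside {I, z_j} and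
   s_k in {I, z_k} for k <> j.  Such a set contains at most two of the 3^n
   strings without identity letters, hence at least (3^n + 1) / 2 readouts are
   needed.

   Conversely, a full-weight string y is paired with the string flip y that
   differs from y in one letter (at a "flip site", taken to the third letter);
   the readout whose set S_U contains both y and flip y also covers every
   string that agrees with y on its support, provided the support contains the
   flip site.  The pairing is an involution with a single fixed point, and every
   non-identity string has a full-weight extension whose flip site lies in its
   support, so one readout per orbit, (3^n + 1) / 2 in total, suffices. *)

Definition pauli_bits (P : pauli) : bool * bool :=
  match P with
  | PI => (false, false) | PX => (true, false)
  | PY => (true, true) | PZ => (false, true)
  end.

Definition bits_pauli (b : bool * bool) : pauli :=
  match b with
  | (false, false) => PI | (true, false) => PX
  | (true, true) => PY | (false, true) => PZ
  end.

Lemma pauli_bitsK : cancel pauli_bits bits_pauli. Proof. by case. Qed.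

HB.instance Definition _ := Finite.copy pauli (can_type pauli_bitsK).

Lemma card_pauli : #|{: pauli}| = 4%N.
Proof.
have bitsK : cancel bits_pauli pauli_bits by case=> [[] []].
by rewrite (bij_eq_card (Bijective pauli_bitsK bitsK)) card_prod card_bool.
Qed.

Section Operators.
Variable n : nat.
Implicit Types (A B C : op n) (F G : 'I_n -> bool -> bool -> algC).

Lemma mulopA A B C : mulop (mulop A B) C = mulop A (mulop B C).
Proof.
apply/ffunP=> p; rewrite !ffunE /=.
under eq_bigr => z _ do rewrite ffunE /= big_distrl /=.
rewrite exchange_big /=; apply: eq_bigr => w _.
rewrite ffunE /= big_distrr /=; apply: eq_bigr => z _.
by rewrite mulrA.
Qed.

Lemma adjop_mul A B : adjop (mulop A B) = mulop (adjop B) (adjop A).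
Proof.
apply/ffunP=> p; rewrite !ffunE /= rmorph_sum; apply: eq_bigr => z _.
by rewrite !ffunE /= rmorphM mulrC.
Qed.

Lemma mulop_tensop F G :
  mulop (tensop F) (tensop G) = tensop (fun k a b => \sum_c F k a c * G k c b).
Proof.
apply/ffunP=> p; rewrite !ffunE /= bigA_distr_bigA /=.
by apply: eq_bigr => z _; rewrite !ffunE /= -big_split.
Qed.

Lemma adjop_tensop F : adjop (tensop F) = tensop (fun k a b => (F k b a)^*).
Proof. by apply/ffunP=> p; rewrite !ffunE /= rmorph_prod. Qed.

Lemma sum_tensop F : \sum_p tensop F p = \prod_k \sum_a \sum_b F k a b.
Proof.
rewrite (eq_bigr _ (fun p _ => congr1 (tensop F) (surjective_pairing p))).
rewrite -(pair_bigA _ (fun x y => tensop F (x, y))) bigA_distr_bigA /=.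
apply: eq_bigr => x _; rewrite bigA_distr_bigA /=; apply: eq_bigr => y _.
by rewrite ffunE.
Qed.

End Operators.

Section Swap.
Variables (n : nat) (p0 j : 'I_n).

Lemma swap_idxK : involutive (swap_idx p0 j).
Proof.
move=> k; rewrite /swap_idx.
have [-> | k_neq_p0] := eqVneq k p0; first by rewrite eqxx; case: eqVneq.
have [-> | k_neq_j] := eqVneq k j; first by rewrite eqxx.
by rewrite (negbTE k_neq_p0) (negbTE k_neq_j).
Qed.

Lemma swap_idx_eq_p0 k : (swap_idx p0 j k == p0) = (k == j).
Proof.
have swap_j : swap_idx p0 j j = p0 by rewrite /swap_idx eqxx; case: eqVneq.
by rewrite -[X in _ == X]swap_j (inj_eq (inv_inj swap_idxK)).
Qed.

Definition swap_basis (x : basis n) : basis n := [ffun k => x (swap_idx p0 j k)].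

Lemma swap_basisK : involutive swap_basis.
Proof. by move=> x; apply/ffunP=> k; rewrite !ffunE swap_idxK. Qed.

Lemma swap_conj (A : op n) :
  mulop (mulop (swap_op p0 j) A) (adjop (swap_op p0 j)) =
  [ffun p => A (swap_basis p.1, swap_basis p.2)].
Proof.
have sum_swap_delta x (G : basis n -> algC) :
    \sum_w (x == swap_basis w)%:R * G w = G (swap_basis x).
  rewrite (bigD1 (swap_basis x)) //= swap_basisK eqxx mul1r big1 ?addr0 // => w w_neq.
  rewrite (_ : (x == _) = false) ?mul0r //.
  by apply: contraNF w_neq => /eqP ->; rewrite swap_basisK.
apply/ffunP=> p; rewrite !ffunE /=.
under eq_bigr => z _ do rewrite !ffunE /= rmorph_nat mulrC.
rewrite sum_swap_delta.
by under eq_bigr => w _ do rewrite ffunE /=; rewrite sum_swap_delta.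
Qed.

Lemma tensop_swap F :
  [ffun p => tensop F (swap_basis p.1, swap_basis p.2)] = tensop (F \o swap_idx p0 j).
Proof.
apply/ffunP=> p; rewrite !ffunE /= (reindex_inj (inv_inj swap_idxK)) /=.
by apply: eq_bigr => k _; rewrite !ffunE swap_idxK.
Qed.

End Swap.

Definition conj_pauli (g : gate) (P : pauli) : pauli :=
  match g, P with
  | GRx, PY => PZ | GRx, PZ => PY
  | GRy, PX => PZ | GRy, PZ => PX
  | _, _ => P
  end.

Definition conj_sign (g : gate) (P : pauli) : algC :=
  match g, P with
  | GRx, PZ | GRy, PX => -1
  | _, _ => 1
  end.

Lemma conj_pauliK g : involutive (conj_pauli g).
Proof. by case: g; case. Qed.

Lemma conj_pauli_inj g : injective (conj_pauli g).
Proof. exact: can_inj (conj_pauliK g). Qed.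

Lemma conj_pauliI g : conj_pauli g PI = PI.
Proof. by case: g. Qed.

Lemma conj_pauli_eqI g P : (conj_pauli g P == PI) = (P == PI).
Proof. by case: g; case: P. Qed.

Lemma conj_sign_pm1 g P : conj_sign g P = 1 \/ conj_sign g P = -1.
Proof. by case: g; case: P; auto. Qed.

Lemma gate_conj_pauli_mx g P a b :
  \sum_c \sum_d gate_mx g a c * pauli_mx P c d * (gate_mx g b d)^* =
  conj_sign g P * pauli_mx (conj_pauli g P) a b.
Proof.
have ii : 'i * 'i = -1 :> algC by rewrite -expr2 sqrCi.
have s2_real : (sqrtC 2)^* = sqrtC 2 :> algC.
  by apply/CrealP; rewrite realE sqrtC_ge0 ler0n.
have s2_sq : sqrtC 2 * sqrtC 2 = 2 :> algC by rewrite -expr2 sqrtCK.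
have s2_neq0 : sqrtC 2 != 0 :> algC by rewrite sqrtC_eq0 pnatr_eq0.
have conjB (x y : algC) : (x - y)^* = x^* - y^* by exact: rmorphB.
have conjM (x y : algC) : (x * y)^* = x^* * y^* by exact: rmorphM.
have conjN (x : algC) : (- x)^* = - x^* by exact: rmorphN.
have conjV (x : algC) : (x^-1)^* = (x^*)^-1 by exact: fmorphV.
rewrite !big_bool; case: g; case: P; case: a; case: b => /=.
all: rewrite ?(conjB, conjM, conjN, conjV, conjC0, conjC1, conjCi, s2_real).
all: move: (sqrtC 2) s2_sq s2_neq0 => s s2_sq s2_neq0.
all: by field: ii s2_sq.
Qed.

Section Conjugation.
Variable n : nat.
Implicit Types (V : 'I_n -> gate) (o : 'I_n -> pauli).

Definition gates_op V : op n := tensop (fun k => gate_mx (V k)).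

Lemma gates_conj_pauli V o :
  mulop (mulop (gates_op V) (pauli_op o)) (adjop (gates_op V)) =
  [ffun p => (\prod_k conj_sign (V k) (o k)) *
             pauli_op (fun k => conj_pauli (V k) (o k)) p].
Proof.
rewrite /gates_op /pauli_op adjop_tensop !mulop_tensop.
apply/ffunP=> p; rewrite !ffunE /= -big_split /=; apply: eq_bigr => k _.
rewrite -gate_conj_pauli_mx exchange_big.
by apply: eq_bigr => d _; rewrite big_distrl.
Qed.

Lemma swap_conj_pauli (p0 j : 'I_n) o :
  mulop (mulop (swap_op p0 j) (pauli_op o)) (adjop (swap_op p0 j)) =
  pauli_op (o \o swap_idx p0 j).
Proof. by rewrite swap_conj tensop_swap. Qed.

Lemma readout_conj_pauli (p0 j : 'I_n) V o :
  mulop (mulop (readout p0 V j) (pauli_op o)) (adjop (readout p0 V j)) =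
  [ffun p => (\prod_k conj_sign (V k) (o (swap_idx p0 j k))) *
             pauli_op (fun k => conj_pauli (V k) (o (swap_idx p0 j k))) p].
Proof.
rewrite /readout adjop_mul !mulopA -[mulop (swap_op p0 j) (mulop _ _)]mulopA.
rewrite -[mulop (mulop (swap_op p0 j) _) _]mulopA swap_conj_pauli -mulopA.
exact: gates_conj_pauli.
Qed.

Lemma prod_conj_sign_pm1 V o :
  \prod_k conj_sign (V k) (o k) = 1 \/ \prod_k conj_sign (V k) (o k) = -1.
Proof.
apply: (big_ind (fun x : algC => x = 1 \/ x = -1)); first by left.
  by move=> x y [->|->] [->|->]; rewrite ?mulr1 ?mulrN1 ?opprK; auto.
by move=> k _; apply: conj_sign_pm1.
Qed.

End Conjugation.

Lemma pauli_mx_dot P Q :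
  \sum_a \sum_b pauli_mx P a b * (pauli_mx Q a b)^* = 2 * (P == Q)%:R.
Proof.
have ii : 'i * 'i = -1 :> algC by rewrite -expr2 sqrCi.
have conjN (x : algC) : (- x)^* = - x^* by exact: rmorphN.
rewrite !big_bool; case: P; case: Q => /=.
all: rewrite ?(conjC0, conjC1, conjN, conjCi).
all: by ring: ii.
Qed.

Section PauliIndependence.
Variable n : nat.
Implicit Types s t : 'I_n -> pauli.

Lemma pauli_op_eq s t : s =1 t -> pauli_op s = pauli_op t.
Proof.
by move=> st; apply/ffunP=> p; rewrite !ffunE; apply: eq_bigr => k _; rewrite st.
Qed.

Lemma pauli_op_dot s t :
  \sum_p pauli_op s p * (pauli_op t p)^* = \prod_k (2 * (s k == t k)%:R).
Proof.
transitivity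
  (\sum_p tensop (fun k a b => pauli_mx (s k) a b * (pauli_mx (t k) a b)^*) p).
  by apply: eq_bigr => p _; rewrite !ffunE rmorph_prod -big_split.
by rewrite sum_tensop; apply: eq_bigr => k _; rewrite pauli_mx_dot.
Qed.

Lemma pauli_op_scaled_eq s t (c : algC) :
  c != 0 -> (forall p, pauli_op s p = c * pauli_op t p) -> s =1 t.
Proof.
move=> c_neq0 st k.
have : \prod_k (2 * (s k == t k)%:R) != 0 :> algC.
  rewrite -pauli_op_dot (eq_bigr _ (fun p _ => congr1 (fun x => x * _) (st p))).
  under eq_bigr do rewrite -mulrA.
  rewrite -big_distrr /= pauli_op_dot mulf_neq0 //.
  by apply/prodf_neq0 => l _; rewrite eqxx mulr1 pnatr_eq0.
by move/prodf_neq0/(_ k isT); case: (s k =P t k) => // _; rewrite mulr0 eqxx.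
Qed.

End PauliIndependence.

Lemma in_S_readoutE n (p0 j : 'I_n) (V : 'I_n -> gate) (s : 'I_n -> pauli) :
  in_S p0 (readout p0 V j) s <->
  nonidentity s /\ exists2 o, observable p0 o &
    s =1 (fun k => conj_pauli (V k) (o (swap_idx p0 j k))).
Proof.
split=> [[s_nonI [o [o_obs conj_o]]] | [s_nonI [o o_obs s_eq]]]; split=> //.
  have c_neq0 : \prod_k conj_sign (V k) (o (swap_idx p0 j k)) != 0.
    by case: (prod_conj_sign_pm1 V (o \o swap_idx p0 j)) => ->; rewrite ?oppr_eq0 oner_eq0.
  exists o => //; move: conj_o; rewrite readout_conj_pauli; set c := \prod_k _.
  case=> /ffunP conj_o.
    by apply: (pauli_op_scaled_eq c_neq0) => p; rewrite -conj_o ffunE.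
  apply: (pauli_op_scaled_eq (c := - c)); first by rewrite oppr_eq0.
  by move=> p; move: (conj_o p); rewrite !ffunE mulNr => ->; rewrite opprK.
exists o; split=> //; rewrite readout_conj_pauli (pauli_op_eq s_eq).
by have [->|->] := prod_conj_sign_pm1 V (o \o swap_idx p0 j); [left | right];
  apply/ffunP=> p; rewrite !ffunE ?mul1r ?mulN1r.
Qed.

Definition zimage n (V : 'I_n -> gate) (k : 'I_n) : pauli := conj_pauli (V k) PZ.

Definition covers n (z : 'I_n -> pauli) (j : 'I_n) (s : 'I_n -> pauli) : bool :=
  [&& s j != PI, s j != z j & [forall k, (k != j) ==> (s k \in [:: PI; z k])]].

Lemma observable_image_covers n (p0 j : 'I_n) V s :
  (exists2 o, observable p0 o & s =1 (fun k => conj_pauli (V k) (o (swap_idx p0 j k)))) <->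
  covers (zimage V) j s.
Proof.
have swap_j : swap_idx p0 j j = p0 by apply/eqP; rewrite swap_idx_eq_p0.
split=> [[o [o_p0 o_off] s_eq] | /and3P[sj_nonI sj_nonZ /forallP s_off]].
  apply/and3P; split.
  - by rewrite s_eq swap_j conj_pauli_eqI; case: o_p0 => ->.
  - by rewrite s_eq swap_j /zimage (inj_eq (@conj_pauli_inj _)); case: o_p0 => ->.
  - apply/forallP=> k; apply/implyP=> k_neq_j; rewrite s_eq !inE.
    have := o_off (swap_idx p0 j k); rewrite swap_idx_eq_p0 k_neq_j => /(_ isT)[] ->.
      by rewrite conj_pauliI eqxx.
    by rewrite eqxx orbT.
pose o l := if l == p0 then conj_pauli (V j) (s j)
            else if s (swap_idx p0 j l) == PI then PI else PZ.
exists o.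
  split=> [|k /negbTE k_neq_p0]; last by rewrite /o k_neq_p0; case: ifP; auto.
  have oj_nonI : conj_pauli (V j) (s j) != PI by rewrite conj_pauli_eqI.
  have oj_nonZ : conj_pauli (V j) (s j) != PZ.
    by rewrite -(inj_eq (@conj_pauli_inj (V j))) conj_pauliK.
  by rewrite /o eqxx; move: oj_nonI oj_nonZ; case: (conj_pauli _ _); auto.
move=> k; rewrite /o swap_idx_eq_p0 swap_idxK.
have [-> | k_neq_j] := eqVneq k j; first by rewrite conj_pauliK.
have := s_off k; rewrite k_neq_j !inE => /orP[] /eqP ->; rewrite ?eqxx ?conj_pauliI //.
by case: ifP => // /eqP ->; rewrite conj_pauliI.
Qed.

Lemma in_S_readoutP n (p0 j : 'I_n) V s :
  in_S p0 (readout p0 V j) s <-> covers (zimage V) j s.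
Proof.
rewrite in_S_readoutE observable_image_covers.
by split=> [[]|cov] //; split=> //; exists j; case/and3P: cov => /eqP.
Qed.

Definition gate_of (P : pauli) : gate :=
  match P with PX => GRy | PY => GRx | _ => GI end.

Lemma in_S_readout_gate_of n (p0 j : 'I_n) (z s : 'I_n -> pauli) :
  (forall k, z k != PI) -> covers z j s -> in_S p0 (readout p0 (gate_of \o z) j) s.
Proof.
have zimage_gate_of k : z k != PI -> zimage (gate_of \o z) k = z k.
  by rewrite /zimage /=; case: (z k).
move=> z_nonI /and3P[sj_nonI sj_z /forallP s_off]; apply/in_S_readoutP/and3P.
rewrite zimage_gate_of //; split=> //; apply/forallP => k.
by rewrite zimage_gate_of.
Qed.

Local Close Scope ring_scope.

Definition full_weight n := [set y : {ffun 'I_n -> pauli} | [forall k, y k != PI]].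

Lemma card_full_weight n : #|full_weight n| = 3 ^ n.
Proof.
have card_nonI : #|[pred P : pauli | P != PI]| = 3 by rewrite cardC1 card_pauli.
rewrite -card_nonI -[in RHS](card_ord n) -card_ffun_on.
apply: eq_card => y; rewrite inE; apply/forallP/ffun_onP => y_nonI k.
  by rewrite inE y_nonI.
by have := y_nonI k; rewrite inE.
Qed.

Lemma card_full_covers n (z : 'I_n -> pauli) j :
  z j != PI -> #|[set s in full_weight n | covers z j s]| <= 2.
Proof.
move=> zj_nonI; set B := [set s in _ | _].
have eval_inj : {in B &, injective (fun s : {ffun 'I_n -> pauli} => s j)}.
  move=> s t; rewrite !inE => /andP[/forallP s_nonI /and3P[_ _ /forallP s_off]].
  move=> /andP[/forallP t_nonI /and3P[_ _ /forallP t_off]] st_j.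
  apply/ffunP=> k; have [-> // | k_neq_j] := eqVneq k j.
  have := s_off k; have := t_off k.
  rewrite k_neq_j !inE (negbTE (s_nonI k)) (negbTE (t_nonI k)).
  by move=> /eqP -> /eqP ->.
rewrite -(card_in_imset eval_inj).
apply: (@leq_trans #|~: [set PI; z j]|).
  apply/subset_leq_card/subsetP => _ /imsetP[s + ->].
  by rewrite !inE negb_or => /andP[_ /and3P[-> -> _]].
by rewrite -[2]/(4 - 2) cardsCs setCK cards2 eq_sym zj_nonI card_pauli.
Qed.

Lemma card_covered_le n (p0 : 'I_n) (A : {set {ffun 'I_n -> pauli}}) L :
  A \subset full_weight n -> (forall U, U \in L -> is_readout p0 U) ->
  (forall s, s \in A -> exists2 U, U \in L & in_S p0 U s) ->
  #|A| <= 2 * size L.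
Proof.
elim: L A => [|U L IHL] A sA_full readL covA.
  rewrite leqn0 cards_eq0; apply/eqP/setP => s; rewrite inE.
  by apply/negbTE/negP => /covA[].
have [V [j defU]] := readL U (mem_head _ _).
set B := [set s in full_weight n | covers (zimage V) j s].
rewrite -(cardsID B A) mulnS leq_add //.
  apply: leq_trans (subset_leq_card (subsetIr A B)) _.
  by apply: card_full_covers; rewrite conj_pauli_eqI.
apply: IHL => [|U' U'L|s].
- exact: subset_trans (subsetDl A B) sA_full.
- by apply: readL; rewrite in_cons U'L orbT.
rewrite in_setD => /andP[s_notB sA]; have [U' U'UL s_U'] := covA s sA.
move: U'UL; rewrite in_cons => /orP[/eqP eqU' | ]; last by exists U'.
case/negP: s_notB; rewrite inE (subsetP sA_full s sA).
by apply/(in_S_readoutP p0); rewrite -defU -eqU'.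
Qed.

Lemma cover_size_ge n (p0 : 'I_n) L : is_cover p0 L -> (3 ^ n + 1) %/ 2 <= size L.
Proof.
case=> _ readL covL.
have : 3 ^ n <= 2 * size L.
  rewrite -card_full_weight; apply: (card_covered_le (p0 := p0)) => // s.
  by rewrite inE => /forallP s_nonI; apply: covL; exists p0; apply/eqP.
have : odd (3 ^ n) by rewrite oddX orbT.
move: (3 ^ n) => m; lia.
Qed.

Lemma involution_transversal (T : finType) (A : {set T}) (f : T -> T) :
  {in A, forall x, f x \in A} -> {in A, forall x, f (f x) = x} ->
  exists R : {set T}, [/\ R \subset A,
    #|R| * 2 <= #|A| + #|[set x in A | f x == x]| &
    {in A, forall x, (x \in R) || (f x \in R)}].
Proof.
move=> fA fK; pose R := [set x in A | enum_rank x <= enum_rank (f x)].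
have sRA : R \subset A by apply/subsetP => x; rewrite inE => /andP[].
exists R; split=> // [|x xA]; last first.
  by rewrite !inE xA fA //= fK //; case: leqP => // /ltnW.
have f_injR : {in R &, injective f}.
  by move=> x y /(subsetP sRA) xA /(subsetP sRA) yA fxy; rewrite -(fK x) // fxy fK.
have sUA : R :|: f @: R \subset A.
  apply/subsetP => x; rewrite inE => /orP[/(subsetP sRA) // | /imsetP[y yR ->]].
  exact/fA/(subsetP sRA).
have sIfix : R :&: f @: R \subset [set x in A | f x == x].
  apply/subsetP => x; rewrite !inE => /andP[/andP[xA le_x] /imsetP[y]].
  rewrite inE => /andP[yA le_y] def_x; rewrite xA /=.
  suff eq_xy : x = y by rewrite {2}def_x -eq_xy.
  apply: enum_rank_inj; apply/val_inj/eqP; rewrite eqn_leq.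
  by move: le_x le_y; rewrite def_x fK // => -> ->.
rewrite muln2 -addnn -{2}(card_in_imset f_injR) -cardsUI.
by rewrite leq_add // subset_leq_card.
Qed.

Definition third (a b : pauli) : pauli :=
  match a, b with
  | PX, PY | PY, PX => PZ
  | PX, PZ | PZ, PX => PY
  | PY, PZ | PZ, PY => PX
  | _, _ => b
  end.

Lemma third_spec a b : a != PI -> b != PI -> b != a ->
  [/\ third a b != PI, third a b != a, third a b != b & third a (third a b) = b].
Proof. by case: a; case: b. Qed.

Section FlipPairing.
Variables (n : nat) (r : 'I_n).
Implicit Types (y : {ffun 'I_n -> pauli}) (s : 'I_n -> pauli).

(* Flipping a mismatch with it to the third letter preserves the reference and
   the set of mismatches; the only full-weight string without mismatch is
   Z at r and X elsewhere. *)
Definition reference y (k : 'I_n) : pauli :=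
  if k == r then PZ else if y r == PZ then PX else PZ.

Definition mismatch y k : bool := y k != reference y k.

Definition flip_site y : 'I_n :=
  if [pick k | mismatch y k & k != r] is Some m then m else r.

Definition flip y : {ffun 'I_n -> pauli} :=
  [ffun k => if (k == flip_site y) && mismatch y k then third (reference y k) (y k)
             else y k].

(* The letter of the readout center at the flip site, missed by both y and
   flip y; for the fixed point any letter other than Z would do. *)
Definition pivot y : pauli :=
  if mismatch y (flip_site y) then reference y (flip_site y) else PY.

Definition center y : {ffun 'I_n -> pauli} :=
  [ffun k => if k == flip_site y then pivot y else y k].

Lemma reference_nonI y k : reference y k != PI.
Proof. by rewrite /reference; case: ifP => //; case: ifP. Qed.

Lemma flip_site_off y k :
  mismatch y k -> k != r -> mismatch y (flip_site y) && (flip_site y != r).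
Proof.
move=> yk k_neq_r; rewrite /flip_site.
by case: pickP => [m /andP[-> ->] // | /(_ k)]; rewrite yk k_neq_r.
Qed.

Lemma flip_site_cases y :
  flip_site y = r \/ mismatch y (flip_site y) && (flip_site y != r).
Proof. by rewrite /flip_site; case: pickP => [m ->|]; auto. Qed.

Lemma mismatch_flip_site y k : mismatch y k -> mismatch y (flip_site y).
Proof.
have [-> yr | k_neq_r yk] := eqVneq k r.
  by case: (flip_site_cases y) => [-> | /andP[]].
by case/andP: (flip_site_off yk k_neq_r).
Qed.

Section FullWeight.
Variable y : {ffun 'I_n -> pauli}.
Hypothesis y_full : y \in full_weight n.

Let y_nonI k : y k != PI. Proof. by move: y_full; rewrite inE => /forallP. Qed.

Let third_mismatch k : mismatch y k ->
  let t := third (reference y k) (y k) in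
  [/\ t != PI, t != reference y k, t != y k & third (reference y k) t = y k].
Proof. by move=> yk; apply: third_spec; rewrite ?reference_nonI ?y_nonI. Qed.

Lemma flip_full : flip y \in full_weight n.
Proof.
rewrite inE; apply/forallP => k; rewrite ffunE.
by case: ifP => [/andP[_ /third_mismatch[]] | _].
Qed.

Lemma reference_flip : reference (flip y) = reference y.
Proof.
suff flip_r : (flip y r == PZ) = (y r == PZ) by rewrite /reference flip_r.
rewrite ffunE; case: ifP => // /andP[_ yr].
have [_ + _ _] := third_mismatch yr.
have ref_r : reference y r = PZ by rewrite /reference eqxx.
by move: yr; rewrite /mismatch ref_r => /negbTE -> /negbTE ->.
Qed.

Lemma mismatch_flip : mismatch (flip y) =1 mismatch y.
Proof.
move=> k; rewrite /mismatch reference_flip ffunE.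
case: ifP => // /andP[_ yk]; move: (yk); rewrite /mismatch => ->.
by case: (third_mismatch yk) => _ ->.
Qed.

Lemma flip_site_flip : flip_site (flip y) = flip_site y.
Proof. by rewrite /flip_site; under eq_pick => k do rewrite mismatch_flip. Qed.

Lemma flipK : flip (flip y) = y.
Proof.
apply/ffunP => k; rewrite !ffunE flip_site_flip mismatch_flip reference_flip.
case: ifP => flipped; rewrite flipped //.
by case/andP: flipped => _ /third_mismatch[].
Qed.

Lemma center_flip : center (flip y) = center y.
Proof.
apply/ffunP => k; rewrite !ffunE /pivot flip_site_flip mismatch_flip reference_flip.
by case: ifP => // k_site; rewrite k_site.
Qed.

Lemma flip_fixed : flip y = y -> y = [ffun k => if k == r then PZ else PX].
Proof.
move=> y_fixed.
have site_ok : ~~ mismatch y (flip_site y).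
  apply/negP => ys; move/ffunP/(_ (flip_site y)): y_fixed.
  by rewrite ffunE eqxx ys /=; case: (third_mismatch ys) => _ _ /eqP.
have y_ref k : y k = reference y k.
  by apply/eqP/negPn; apply: contra site_ok; apply: mismatch_flip_site.
have yr : y r = PZ by rewrite y_ref /reference eqxx.
by apply/ffunP => k; rewrite ffunE y_ref /reference yr eqxx.
Qed.

Lemma pivot_nonI : pivot y != PI.
Proof. by rewrite /pivot; case: ifP; rewrite ?reference_nonI. Qed.

Lemma pivot_neq : y (flip_site y) != pivot y.
Proof.
rewrite /pivot; case: ifP => // no_mismatch.
case: (flip_site_cases y) => [site_r | /andP[]]; last by rewrite no_mismatch.
by move: no_mismatch; rewrite site_r /mismatch /reference eqxx => /negbFE/eqP ->.
Qed.

Lemma center_nonI k : center y k != PI.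
Proof. by rewrite ffunE; case: ifP; rewrite ?pivot_nonI ?y_nonI. Qed.

Lemma center_covers s :
  (forall k, s k \in [:: PI; y k]) -> s (flip_site y) != PI ->
  covers (center y) (flip_site y) s.
Proof.
move=> s_dom s_site; apply/and3P; split=> //.
  have := s_dom (flip_site y); rewrite !inE (negbTE s_site) /= ffunE eqxx => /eqP ->.
  exact: pivot_neq.
by apply/forallP => k; apply/implyP => /negbTE k_site; rewrite ffunE k_site.
Qed.

End FullWeight.

(* Off r and off the support of s, [extend s c] agrees with its reference, so its
   mismatches lie in the support of s or at r. *)
Definition extend s c : {ffun 'I_n -> pauli} :=
  [ffun k => if k == r then c else if s k != PI then s k
             else if c == PZ then PX else PZ].

Lemma extend_full s c : c != PI -> extend s c \in full_weight n.
Proof.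
move=> c_nonI; rewrite inE; apply/forallP => k; rewrite ffunE.
by case: ifP => // _; case: ifP => // _; case: ifP.
Qed.

Lemma extend_dominates s c :
  s r \in [:: PI; c] -> forall k, s k \in [:: PI; extend s c k].
Proof.
move=> s_r k; rewrite ffunE; have [-> // | _] := eqVneq k r.
by case: ifP; rewrite !inE ?eqxx ?orbT // => /negbFE ->.
Qed.

Lemma mismatch_extend s c k : k != r -> mismatch (extend s c) k -> s k != PI.
Proof.
move=> /negbTE k_neq_r; rewrite /mismatch /reference !ffunE k_neq_r eqxx.
by case: (s k != PI); rewrite ?eqxx.
Qed.

Lemma exists_dominating s : nonidentity s ->
  exists y, [/\ y \in full_weight n, forall k, s k \in [:: PI; y k]
              & s (flip_site y) != PI].
Proof.
move=> [l /eqP s_l].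
have [s_r | s_r] := eqVneq (s r) PI; last first.
  exists (extend s (s r)); split.
  - exact: extend_full.
  - by apply: extend_dominates; rewrite !inE eqxx orbT.
  case: (flip_site_cases (extend s (s r))) => [-> // | /andP[site_mismatch site_neq_r]].
  exact: mismatch_extend site_mismatch.
have l_neq_r : l != r by apply: contraNneq s_l => ->; rewrite s_r.
(* choose the value at r so that l becomes a mismatch *)
pose c := if s l == PZ then PZ else PX.
exists (extend s c); split.
- by apply: extend_full; rewrite /c; case: ifP.
- by apply: extend_dominates; rewrite s_r inE eqxx.
have l_mismatch : mismatch (extend s c) l.
  rewrite /mismatch /reference !ffunE eqxx (negbTE l_neq_r) s_l /c.
  by case: (s l =P PZ) => [-> | /eqP].
have /andP[site_mismatch site_neq_r] := flip_site_off l_mismatch l_neq_r.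
exact: mismatch_extend site_mismatch.
Qed.

End FlipPairing.

Section EdgeReadout.
Variables (n : nat) (p0 : 'I_n).

Definition edge_readout (y : {ffun 'I_n -> pauli}) : op n :=
  readout p0 (gate_of \o center p0 y) (flip_site p0 y).

Lemma edge_readout_flip y :
  y \in full_weight n -> edge_readout (flip p0 y) = edge_readout y.
Proof. by move=> y_full; rewrite /edge_readout center_flip ?flip_site_flip. Qed.

Lemma exists_small_cover : exists L, is_cover p0 L /\ size L * 2 <= 3 ^ n + 1.
Proof.
have [R [_ card_R R_reps]] := involution_transversal (@flip_full n p0) (@flipK n p0).
exists (undup [seq edge_readout y | y <- enum R]); split; last first.
  have fixed_le1 : #|[set y in full_weight n | flip p0 y == y]| <= 1.
    rewrite -(cards1 [ffun k => if k == p0 then PZ else PX]).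
    apply/subset_leq_card/subsetP => y.
    by rewrite in_set1 in_set => /andP[y_full /eqP /(flip_fixed y_full) ->].
  have size_L : size (undup [seq edge_readout y | y <- enum R]) <= #|R|.
    by rewrite cardE (leq_trans (size_undup _)) ?size_map.
  apply: leq_trans (leq_mul size_L (leqnn 2)) (leq_trans card_R _).
  by rewrite card_full_weight leq_add2l.
split=> [||s /(exists_dominating p0)[y [y_full s_dom s_site]]].
- exact: undup_uniq.
- by move=> U; rewrite mem_undup => /mapP[y _ ->]; do 2!eexists.
have [y' y'R edge_y'] : exists2 y', y' \in R & edge_readout y' = edge_readout y.
  case/orP: (R_reps y y_full) => [yR | fyR]; first by exists y.
  by exists (flip p0 y) => //; rewrite edge_readout_flip.
exists (edge_readout y'); first by rewrite mem_undup map_f ?mem_enum.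
rewrite edge_y'; apply: in_S_readout_gate_of; first exact: center_nonI.
exact: center_covers.
Qed.

End EdgeReadout.

Theorem mainTheorem1 (n : nat) (hn : (0 < n)%N) :
  min_cover_card (Ordinal hn) ((3 ^ n + 1) %/ 2).
Proof.
have [L [L_cover size_L]] := exists_small_cover (Ordinal hn).
split=> [|L' /cover_size_ge //]; exists L; split=> //.
by apply/eqP; rewrite eqn_leq (cover_size_ge L_cover) andbT leq_divRL.
Qed.
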